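(* Let $(Q,\cdot,\times,\mathrm{tr}_\cdot,\mathrm{tr}_\times,\pi,\mu)$ be a character algebra with $1_\cdot\times1_\cdot=n1_\cdot$, and let $d=\dim Q$. (1) Both $(Q,\cdot)$ and $(Q,\times)$ are isomorphic as algebras to $\mathbb{C}^d$. Let $\{\mathrm{X}_i\}_{i=1}^d$ be the minimal idempotents of $(Q,\cdot)$ and $\{\Psi_j\}_{j=1}^d$ those of $(Q,\times)$. (2) $\pi\mathrm{X}_i=\mathrm{X}_i$ and $\mu\Psi_j=\Psi_j$ for all $i,j$; $\mu$ permutes the $\mathrm{X}_i$ and $\pi$ permutes the $\Psi_j$, defining involutions (also denoted $\mu,\pi$) of the index sets by $\mu\mathrm{X}_i=\mathrm{X}_{\mu(i)}$, $\pi\Psi_j=\Psi_{\pi(j)}$. (3) Setting $A_i:=(\mathrm{X}_i,\mathrm{X}_i)$, $B_j:=(\Psi_j,\Psi_j)$, $C_{ij}:=(\mathrm{X}_i,\Psi_j)$, one has $(\mathrm{X}_i,\mathrm{X}_{i'})=A_i\delta_{ii'}$, $(\Psi_j,\Psi_{j'})=B_j\delta_{jj'}$, $A_i=\mathrm{tr}_\cdot(\mathrm{X}_i)>0$, $B_j=\mathrm{tr}_\times(\Psi_j)>0$, and $$B_k\delta_{kl}=\sum_{i=1}^d A_i^{-1}\,\overline{C_{ik}}\,C_{il},\qquad A_i\delta_{ij}=\sum_{s=1}^d B_s^{-1}C_{is}\overline{C_{js}} .$$ Moreover $A_{\mu(i)}=A_i$, $B_{\pi(j)}=B_j$, $C_{i\pi(j)}=\overline{C_{ij}}$,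 $C_{\mu(i)j}=\overline{C_{ij}}$. (4) Conversely, the data $(A,B,C)$ together with the involutions $\mu,\pi$ on the index sets determine the character algebra up to isomorphism. (5) $1_\cdot/n$ is an idempotent for $\times$ and $1_\times$ is an idempotent for $\cdot$; writing $1_\cdot/n=\sum_j n_j\Psi_j$ and $1_\times=\sum_i m_i\mathrm{X}_i$ with $n_j,m_i\in\{0,1\}$, one has $$A_i=n\sum_j C_{ij}n_j,\qquad B_j=\sum_i C_{ij}m_i .$$ In particular, if $1_\cdot/n=\Psi_1$ and $1_\times=\mathrm{X}_1$, then $A_i=nC_{i1}$ and $B_j=C_{1j}$.
   Context: A character algebra is a finite-dimensional complex vector space $Q$ with two commutative associative unital bilinear products $\cdot$ (unit $1_\cdot$) and $\times$ (unit $1_\times$), two linear functionals $\mathrm{tr}_\cdot,\mathrm{tr}_\times:Q\to\mathbb{C}$, and two commuting complex-antilinear involutions $\pi,\mu$ of $Q$, each of which is a ring automorphism for both products, such that: (i) $\mathrm{tr}_\cdot(\pi a)=\mathrm{tr}_\cdot(\mu a)=\overline{\mathrm{tr}_\cdot(a)}$ and $\mathrm{tr}_\times(\pi a)=\mathrm{tr}_\times(\mu a)=\overline{\mathrm{tr}_\times(a)}$ for all $a$; (ii) $\mathrm{tr}_\cdot(a\cdot\pi b)=\mathrm{tr}_\times(a\times\mu b)$ for all $a,b$, and this common value is denoted $(a,b)$; (iii) $(a,a)>0$ for all $a\neq 0$; (iv) $1_\times\cdot 1_\times=1_\times$ and $1_\cdot\times 1_\cdot=n\,1_\cdot$ for some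 real $n>0$. An isomorphism of character algebras is a linear bijection intertwining both products, both functionals and both involutions. *)

(* The complex field is abstracted as an arbitrary
   numClosedFieldType C (algebraically closed, with conjugation ^* and the
   partial order in which 0 < z means "z is a positive real"). *)
From HB Require Import structures.
From mathcomp Require Import all_boot all_order all_algebra.
Set Implicit Arguments. Unset Strict Implicit. Unset Printing Implicit Defensive.
Import Order.TTheory GRing.Theory Num.Theory Num.Syntax.
Local Open Scope ring_scope.

Record ops (C : numClosedFieldType) (Q : vectType C) := Ops {
  dot : Q -> Q -> Q;
  cross : Q -> Q -> Q;
  one_d : Q;
  one_x : Q;
  tr_d : Q -> C;
  tr_x : Q -> C;
  piA : Q -> Q;
  muA : Q -> Q }.

Section CharAlg.
Variables (C : numClosedFieldType).

Definition comm_assoc_unital_bilinear (Q : vectType C) (m : Q -> Q -> Q) (e : Q) :=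
  [/\ forall (a : C) (x y z : Q), m (a *: x + y) z = a *: m x z + m y z,
      forall (a : C) (x y z : Q), m z (a *: x + y) = a *: m z x + m z y,
      forall x y, m x y = m y x,
      forall x y z, m x (m y z) = m (m x y) z &
      forall x, m e x = x].

Definition lin_functional (Q : vectType C) (t : Q -> C) :=
  forall (a : C) (x y : Q), t (a *: x + y) = a * t x + t y.

Definition antilinear (Q : vectType C) (f : Q -> Q) :=
  forall (a : C) (x y : Q), f (a *: x + y) = (a^*) *: f x + f y.

Definition ring_aut (Q : vectType C) (m : Q -> Q -> Q) (e : Q) (f : Q -> Q) :=
  bijective f /\ (forall x y, f (m x y) = m (f x) (f y)) /\ f e = e.

Definition is_char_algebra (Q : vectType C) (o : ops Q) : Prop :=
  [/\ comm_assoc_unital_bilinear (dot o) (one_d o)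
      /\ comm_assoc_unital_bilinear (cross o) (one_x o)
      /\ lin_functional (tr_d o) /\ lin_functional (tr_x o),
      [/\ antilinear (piA o), antilinear (muA o),
          involutive (piA o), involutive (muA o) &
          forall x, piA o (muA o x) = muA o (piA o x)],
      [/\ ring_aut (dot o) (one_d o) (piA o), ring_aut (cross o) (one_x o) (piA o),
          ring_aut (dot o) (one_d o) (muA o) & ring_aut (cross o) (one_x o) (muA o)],
      [/\
      (forall a, [/\ tr_d o (piA o a) = (tr_d o a)^*, tr_d o (muA o a) = (tr_d o a)^*,
                     tr_x o (piA o a) = (tr_x o a)^* & tr_x o (muA o a) = (tr_x o a)^*]),
      (forall a b, tr_d o (dot o a (piA o b)) = tr_x o (cross o a (muA o b))) &
      (forall a, a != 0 -> 0 < tr_d o (dot o a (piA o a)))] &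
      dot o (one_x o) (one_x o) = one_x o /\
      exists n : C, [/\ n \is Num.real, 0 < n & cross o (one_d o) (one_d o) = n *: one_d o]].

Definition ip (Q : vectType C) (o : ops Q) (a b : Q) : C := tr_d o (dot o a (piA o b)).

Definition alg_iso_Cd (Q : vectType C) (m : Q -> Q -> Q) (e : Q) (d : nat) :=
  exists f : Q -> 'rV[C]_d,
    [/\ forall (a : C) x y, f (a *: x + y) = a *: f x + f y,
        bijective f,
        forall x y i, f (m x y) 0 i = f x 0 i * f y 0 i &
        forall i, f e 0 i = 1].

Definition min_idem (Q : vectType C) (m : Q -> Q -> Q) (e : Q) :=
  [/\ e != 0, m e e = e &
      forall f, m f f = f -> m f e = f -> f = 0 \/ f = e].

Definition enumerates (Q : vectType C) (d : nat) (P : Q -> Prop) (X : 'I_d -> Q) :=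
  injective X /\ forall e, P e <-> exists i, e = X i.

Definition char_alg_iso (Q Q' : vectType C) (o : ops Q) (o' : ops Q') (f : Q -> Q') :=
  [/\ forall (a : C) x y, f (a *: x + y) = a *: f x + f y,
      bijective f,
      (forall x y, f (dot o x y) = dot o' (f x) (f y)) /\
      (forall x y, f (cross o x y) = cross o' (f x) (f y)),
      (forall x, tr_d o' (f x) = tr_d o x) /\ (forall x, tr_x o' (f x) = tr_x o x) &
      (forall x, f (piA o x) = piA o' (f x)) /\ (forall x, f (muA o x) = muA o' (f x))].

End CharAlg.

From HB Require Import structures.
From mathcomp Require Import all_boot all_order all_algebra spectral.
From Stdlib Require Import Classical.
Set Implicit Arguments. Unset Strict Implicit. Unset Printing Implicit Defensive.
Import Order.TTheory GRing.Theory Num.Theory Num.Syntax.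
Import passmx.
Local Open Scope ring_scope.

(* Positivity of (a, a) makes (Q, .) and (Q, x) reduced: by adjointness a
   nilpotent would have norm 0.  In a reduced finite-dimensional commutative
   algebra over an algebraically closed field, the kernel and image of any
   multiplication operator are complementary ideals; splitting idempotents along
   them must stop, at a complete orthogonal family of primitive idempotents.
   These are exactly the minimal idempotents, and they form a basis in which the
   product is coordinatewise, the coordinates of a being (a, X_i) / A_i.
   An involution entering the form fixes each minimal idempotent X (otherwise
   (X, X) = tr (X . pi X) = 0), while the other one, being an automorphism,
   permutes them.  Expanding Psi_k along the X_i and X_i along the Psi_j gives
   the orthogonality relations.  Two character algebras with the same data are
   isomorphic through X_i |-> X'_i, which maps Psi_j to Psi'_j since both have
   coordinates conj (C_ij) / A_i.  Part (5) pairs the idempotent expansions of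
   1_. / n and 1_x with the X_i and the Psi_j. *)

Section Bilinear.
Variables (C : numClosedFieldType) (Q : vectType C) (m : Q -> Q -> Q) (e : Q).
Hypothesis Hm : comm_assoc_unital_bilinear m e.

Lemma mC x y : m x y = m y x. Proof. by case: Hm. Qed.
Lemma mA x y z : m x (m y z) = m (m x y) z. Proof. by case: Hm. Qed.
Lemma m1 x : m e x = x. Proof. by case: Hm. Qed.
Lemma mr1 x : m x e = x. Proof. by rewrite mC m1. Qed.
Lemma mCA x y z : m x (m y z) = m y (m x z). Proof. by rewrite !mA (mC x y). Qed.
Lemma mACA x y z w : m (m x y) (m z w) = m (m x z) (m y w).
Proof. by rewrite -!mA (mCA y). Qed.

Definition mulL (z : Q) : Q -> Q := m z.
Fact mulL_is_linear z : linear (mulL z).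
Proof. by move=> a x y; rewrite /mulL; case: Hm => _ ->. Qed.
HB.instance Definition _ z := GRing.isLinear.Build C Q Q *:%R (mulL z) (mulL_is_linear z).

Lemma mDr z x y : m z (x + y) = m z x + m z y. Proof. exact: (linearD (mulL z)). Qed.
Lemma mZr z a x : m z (a *: x) = a *: m z x. Proof. exact: (linearZ_LR (mulL z)). Qed.
Lemma m0r z : m z 0 = 0. Proof. exact: (linear0 (mulL z)). Qed.
Lemma mBr z x y : m z (x - y) = m z x - m z y. Proof. exact: (linearB (mulL z)). Qed.
Lemma msumr z I (r : seq I) (P : pred I) (F : I -> Q) :
  m z (\sum_(i <- r | P i) F i) = \sum_(i <- r | P i) m z (F i).
Proof. exact: (linear_sum (mulL z)). Qed.
Lemma mDl z x y : m (x + y) z = m x z + m y z. Proof. by rewrite !(mC _ z) mDr. Qed.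
Lemma mZl z a x : m (a *: x) z = a *: m x z. Proof. by rewrite !(mC _ z) mZr. Qed.
Lemma m0l z : m 0 z = 0. Proof. by rewrite mC m0r. Qed.
Lemma mBl z x y : m (x - y) z = m x z - m y z. Proof. by rewrite !(mC _ z) mBr. Qed.
Lemma msuml z I (r : seq I) (P : pred I) (F : I -> Q) :
  m (\sum_(i <- r | P i) F i) z = \sum_(i <- r | P i) m (F i) z.
Proof. by rewrite mC msumr; apply: eq_bigr => i _; rewrite mC. Qed.

Definition lmul z : 'End(Q) := linfun (mulL z).
Lemma lmulE z x : lmul z x = m z x. Proof. by rewrite lfunE. Qed.

End Bilinear.

Section Functional.
Variables (C : numClosedFieldType) (Q : vectType C) (t : Q -> C).
Hypothesis Ht : lin_functional t.

Definition regular_fun : Q -> C^o := t.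
Fact regular_fun_is_linear : linear regular_fun.
Proof. by move=> a x y; rewrite /regular_fun Ht. Qed.
HB.instance Definition _ :=
  GRing.isLinear.Build C Q C^o *:%R regular_fun regular_fun_is_linear.

Lemma tD x y : t (x + y) = t x + t y. Proof. exact: (linearD regular_fun). Qed.
Lemma tZ a x : t (a *: x) = a * t x. Proof. exact: (linearZ_LR regular_fun). Qed.
Lemma t0 : t 0 = 0. Proof. exact: (linear0 regular_fun). Qed.
Lemma tsum I (r : seq I) (P : pred I) (F : I -> Q) :
  t (\sum_(i <- r | P i) F i) = \sum_(i <- r | P i) t (F i).
Proof. exact: (linear_sum regular_fun). Qed.
End Functional.

Section Antilinear.
Variables (C : numClosedFieldType) (Q : vectType C) (s : Q -> Q).
Hypothesis Hs : antilinear s.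

Lemma sD x y : s (x + y) = s x + s y.
Proof. by have := Hs 1 x y; rewrite !scale1r rmorph1 scale1r. Qed.
Lemma s0 : s 0 = 0.
Proof. by apply: (addrI (s 0)); rewrite -sD !addr0. Qed.
Lemma sZ a x : s (a *: x) = a^* *: s x.
Proof. by have := Hs a x 0; rewrite !addr0 s0 addr0. Qed.
Lemma ssum I (r : seq I) (P : pred I) (F : I -> Q) :
  s (\sum_(i <- r | P i) F i) = \sum_(i <- r | P i) s (F i).
Proof. exact: (big_morph s sD s0). Qed.
End Antilinear.

Lemma stable_subspace_eigenvector (C : numClosedFieldType) (W : vectType C)
    (f : 'End(W)) (V : {vspace W}) :
  V != 0%VS -> (forall v, v \in V -> f v \in V) ->
  exists a v, [/\ v \in V, v != 0 & f v = a *: v].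
Proof.
move=> V0 Vf; pose g : 'End(subvs_of V) := linfun (vsproj V \o f \o vsval).
have dim_gt0 : (0 < \dim {:subvs_of V})%N by rewrite dimvf /dim /= lt0n dimv_eq0.
have [a ha] := eigenvalue_closed (mxof (vbasis _) (vbasis _) g) dim_gt0.
have : leigenvalue g a.
  by rewrite /leigenvalue (leigenspaceE (vbasisP _)) (vsof_eq0 (vbasisP _)).
rewrite /leigenvalue -vpick0; set w := vpick _ => w0.
have : w \in leigenspace g a by apply: memv_pick.
rewrite /leigenspace memv_ker !lfunE /= !lfunE /= subr_eq0 => /eqP gw.
exists a, (vsval w); split; first exact: subvsP.
  by apply: contra w0 => /eqP w0; apply/eqP/subvs_inj; rewrite w0 linear0.
rewrite -[LHS](vsprojK (U := V)) ?gw ?lfunE /= ?linearZ ?lfunE //.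
exact/Vf/subvsP.
Qed.

Section Reduced.
Variables (C : numClosedFieldType) (Q : vectType C) (m : Q -> Q -> Q) (e : Q).
Hypotheses (Hm : comm_assoc_unital_bilinear m e) (Hred : forall x, m x x = 0 -> x = 0).
Let mC := mC Hm. Let mA := mA Hm. Let m1 := m1 Hm. Let mr1 := mr1 Hm.
Let mCA := mCA Hm. Let mACA := mACA Hm.
Let mDl := mDl Hm. Let mDr := mDr Hm. Let mZl := mZl Hm. Let mZr := mZr Hm.
Let m0l := m0l Hm. Let m0r := m0r Hm. Let mBl := mBl Hm.
Let msuml := msuml Hm. Let msumr := msumr Hm. Let lmulE := lmulE Hm.

Definition idem p := m p p = p.
Definition primitive p := forall x, exists a, m x p = a *: p.

Section KernelImage.
Variable b : Q.
Local Notation K := (lker (lmul m b)).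
Local Notation I := (limg (lmul m b)).

Lemma mul_ker_img z w : z \in K -> w \in I -> m z w = 0.
Proof.
rewrite memv_ker lmulE => /eqP bz /memv_imgP [y _ ->].
by rewrite lmulE mA (mC z) bz m0l.
Qed.

Lemma ker_img_disjoint z : z \in K -> z \in I -> z = 0.
Proof. by move=> zK zI; apply/Hred/mul_ker_img. Qed.

(* Reducedness makes the kernel and the image of multiplication by b
   complementary ideals. *)
Lemma unit_split_ker_img :
  exists f g, [/\ idem f, idem g, m f g = 0, f + g = e & f \in K /\ g \in I].
Proof.
have KI : (K + I)%VS = fullv.
  apply/eqP; rewrite eqEdim subvf /= dimv_disjoint_sum.
    by rewrite -(limg_ker_dim (lmul m b) fullv) capfv addnC.
  apply/eqP; rewrite -subv0; apply/subvP => z /memv_capP [zK zI].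
  by rewrite (ker_img_disjoint zK zI) mem0v.
have /memv_addP [f fK [g gI efg]] : e \in (K + I)%VS by rewrite KI memvf.
have fg := mul_ker_img fK gI.
exists f, g; split => //.
- by rewrite /idem -[RHS]mr1 efg mDr fg addr0.
- by rewrite /idem -[RHS]mr1 efg mDr mC fg add0r.
Qed.

End KernelImage.

(* Some c = x u is not a multiple of u; for an eigenvalue a of multiplication
   by c on u Q, the element b := c - a u is nonzero but kills an eigenvector, so
   the kernel/image splitting of b cuts u into two nonzero pieces. *)
Lemma split_idem u : idem u -> ~ primitive u ->
  exists f g, [/\ idem f, idem g, f != 0, g != 0 & m f g = 0 /\ f + g = u].
Proof.
move=> uu /not_all_ex_not [x /not_ex_all_not xu].
pose c := m x u; pose V := limg (lmul m u).
have uV : u \in V by apply/memv_imgP; exists u; rewrite ?memvf // lmulE uu.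
have V0 : V != 0%VS.
  apply/eqP => V0; apply: (xu 0).
  by move: uV; rewrite V0 memv0 => /eqP ->; rewrite m0r scale0r.
have [a [v [vV v0 cv]]] : exists a v, [/\ v \in V, v != 0 & lmul m c v = a *: v].
  apply: stable_subspace_eigenvector => // w /memv_imgP [y _ ->]; apply/memv_imgP.
  by exists (m c y); rewrite ?memvf // !lmulE mCA.
rewrite lmulE in cv.
have uv : m u v = v by move/memv_imgP: vV => [y _ ->]; rewrite lmulE mA uu.
pose b := c - a *: u.
have b0 : b != 0 by apply/eqP => /eqP; rewrite subr_eq0 => /eqP /xu.
have bu : m b u = b by rewrite /b mBl mZl uu -mA uu.
have vK : v \in lker (lmul m b) by rewrite memv_ker lmulE /b mBl mZl uv cv subrr.
have [f [g [ff gg fg fge [fK gI]]]] := unit_split_ker_img b.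
have uf_idem w : idem w -> idem (m u w) by move=> ww; rewrite /idem mACA uu ww.
exists (m u f), (m u g); split; try exact: uf_idem.
- apply/eqP => uf0; apply/(negP v0)/eqP.
  have vg : m v g = 0 := mul_ker_img vK gI.
  by rewrite -uv -[u]mr1 -fge mDr mDl uf0 m0l add0r -mA (mC g) vg m0r.
- apply/eqP => ug0; apply/(negP b0)/eqP.
  have bf : m b f = 0 by move: fK; rewrite memv_ker lmulE => /eqP.
  by rewrite -bu -[u]mr1 -fge mDr ug0 addr0 mCA bf m0r.
- split; last by rewrite -mDr fge mr1.
  by rewrite mACA uu fg m0r.
Qed.

Definition orth_decomp u (r : seq Q) :=
  [/\ uniq r, forall p, p \in r -> [/\ idem p, p != 0 & primitive p],
      forall p q, p \in r -> q \in r -> p != q -> m p q = 0 &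
      \sum_(p <- r) p = u].

Lemma orth_decomp_mul u r p : orth_decomp u r -> p \in r -> m p u = p.
Proof.
move=> [ur rP orth <-] pr; have [pp _ _] := rP p pr.
rewrite msumr (bigD1_seq p pr ur) /= pp big1_seq ?addr0 // => q /andP [qp qr].
by apply: orth; rewrite // eq_sym.
Qed.

Lemma dim_img_idem_lt u w : idem u -> idem w -> m w u = w -> w != u ->
  (\dim (limg (lmul m w)) < \dim (limg (lmul m u)))%N.
Proof.
move=> uu ww wu; apply: contraNT; rewrite -leqNgt => le_dim.
have sub_img : (limg (lmul m w) <= limg (lmul m u))%VS.
  apply/subvP => z /memv_imgP [y _ ->]; apply/memv_imgP.
  by exists (m w y); rewrite ?memvf // !lmulE mA (mC u) wu.
have /memv_imgP [y _] : u \in limg (lmul m w).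
  rewrite (eqP (_ : limg (lmul m w) == limg (lmul m u))%VS) ?eqEdim ?sub_img //.
  by apply/memv_imgP; exists u; rewrite ?memvf // lmulE uu.
by rewrite lmulE => uwy; apply/eqP; rewrite -wu {1}uwy mA ww -uwy.
Qed.

Lemma exists_orth_decomp u : idem u -> exists r, orth_decomp u r.
Proof.
have [k] := ubnP (\dim (limg (lmul m u))); elim: k u => // k IH u dimu uu.
have [->|u0] := eqVneq u 0.
  by exists [::]; split; rewrite ?big_nil.
case: (classic (primitive u)) => pu.
  exists [:: u]; split; rewrite ?big_seq1 //.
    by move=> p; rewrite inE => /eqP ->.
  by move=> p q; rewrite !inE => /eqP -> /eqP ->; rewrite eqxx.
have [f [g [ff gg f0 g0 [fg fgu]]]] := split_idem uu pu.
have gf : m g f = 0 by rewrite mC.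
have piece w w' : idem w -> w' != 0 -> m w w' = 0 -> w + w' = u ->
    exists r, orth_decomp w r.
  move=> ww w'0 ww' ew; apply: (IH w _ ww); rewrite -ltnS; apply: leq_trans dimu.
  have wu : m w u = w by rewrite -ew mDr ww ww' addr0.
  rewrite ltnS dim_img_idem_lt //; apply: contra w'0 => /eqP wu'.
  by apply/eqP; rewrite -(addKr w w') ew wu' addNr.
have [rf df] := piece f g ff g0 fg fgu.
have [rg dg] := piece g f gg f0 gf (etrans (addrC g f) fgu).
have rfg p q : p \in rf -> q \in rg -> m p q = 0.
  move=> pr qr; rewrite -(orth_decomp_mul df pr) -(orth_decomp_mul dg qr).
  by rewrite mACA fg m0r.
case: df dg => urf rfP orf sf [urg rgP org sg].
exists (rf ++ rg); split; last by rewrite big_cat /= sf sg.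
- rewrite cat_uniq urf urg andbT; apply/hasPn => q qg; apply/negP => qf.
  by have [qq q0 _] := rgP q qg; move: q0; rewrite -qq rfg // eqxx.
- by move=> p; rewrite mem_cat => /orP [/rfP|/rgP].
- move=> p q; rewrite !mem_cat => /orP [pf|pg] /orP [qf|qg] pq.
  + exact: orf.
  + exact: rfg.
  + by rewrite mC rfg.
  + exact: org.
Qed.

Lemma idem_scale_eq01 a p : p != 0 -> idem p -> idem (a *: p) -> a = 0 \/ a = 1.
Proof.
move=> p0 pp; rewrite /idem mZl mZr pp scalerA => /eqP.
rewrite -subr_eq0 -scalerBl scaler_eq0 (negbTE p0) orbF subr_eq0 -{3}[a]mulr1.
by rewrite -subr_eq0 -mulrBr mulf_eq0 subr_eq0 => /orP [] /eqP; [left|right].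
Qed.

Lemma primitive_min_idem p : idem p -> p != 0 -> primitive p -> min_idem m p.
Proof.
move=> pp p0 pprim; split => // f ff fp.
have [a fa] := pprim f; rewrite fp in fa.
have [a0|a1] : a = 0 \/ a = 1 by apply: (idem_scale_eq01 p0 pp); rewrite -fa.
  by left; rewrite fa a0 scale0r.
by right; rewrite fa a1 scale1r.
Qed.

Lemma min_idem_mem_decomp r p : orth_decomp e r -> min_idem m p -> p \in r.
Proof.
move=> [ur rP orth sr] [p0 pp pmin].
have [/hasP [q qr pq0]|/hasPn pr0] := boolP (has (fun q => m p q != 0) r).
  have [qq q0 qprim] := rP q qr; have [a pqa] := qprim p.
  have [a0|a1] : a = 0 \/ a = 1.
    by apply: (idem_scale_eq01 q0 qq); rewrite -pqa /idem mACA pp qq.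
    by move: pq0; rewrite pqa a0 scale0r eqxx.
  have qp : m q p = q by rewrite mC pqa a1 scale1r.
  by case: (pmin q qq qp) => [q0'|<-] //; move: q0; rewrite q0' eqxx.
move: p0; rewrite -[p]mr1 -sr msumr big1_seq ?eqxx // => q /andP [_ /pr0].
by rewrite negbK => /eqP.
Qed.

Lemma min_idem_orth p q : min_idem m p -> min_idem m q -> p != q -> m p q = 0.
Proof.
have [r dr] := exists_orth_decomp (m1 e).
by case: (dr) => _ _ orth _ mp mq; apply: orth; apply: min_idem_mem_decomp.
Qed.

Lemma min_idem_primitive p : min_idem m p -> primitive p.
Proof.
move=> mp; have [r dr] := exists_orth_decomp (m1 e).
by case: (dr) => _ rP _ _; case: (rP p (min_idem_mem_decomp dr mp)).
Qed.

Lemma exists_min_idem_enum : exists X : 'I_(\dim {:Q}) -> Q, enumerates (min_idem m) X.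
Proof.
have [r dr] := exists_orth_decomp (m1 e); case: (dr) => ur rP orth sr.
have free_r : free (in_tuple r).
  apply/freeP => k ks i; have [ii i0 _] := rP _ (mem_nth 0 (ltn_ord i)).
  move/(congr1 (m r`_i)): ks; rewrite m0r msumr (bigD1 i) //= mZr ii big1 ?addr0.
    by move/eqP; rewrite scaler_eq0 (negbTE i0) orbF => /eqP.
  by move=> j ji; rewrite mZr orth ?scaler0 ?mem_nth // nth_uniq // eq_sym.
have span_r : <<r>>%VS = fullv.
  apply/eqP; rewrite eqEsubv subvf /=; apply/subvP => x _.
  rewrite -[x]mr1 -sr msumr big_seq; apply: rpred_sum => q qr.
  have [_ _ qprim] := rP q qr; have [a ->] := qprim x.
  by apply/rpredZ/memv_span.
have size_r : size r = \dim {:Q} by rewrite -span_r; apply/esym/eqP.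
exists (fun i => nth 0 r i); split.
  by move=> i j /eqP; rewrite nth_uniq ?size_r // => /eqP /val_inj.
move=> p; split.
  move=> mp; have pr := min_idem_mem_decomp dr mp.
  have pi : (index p r < \dim {:Q})%N by rewrite -size_r index_mem.
  by exists (Ordinal pi); rewrite /= nth_index.
move=> [i ->]; have ir : (i < size r)%N by rewrite size_r.
by have [ii i0 iprim] := rP _ (mem_nth 0 ir); apply: primitive_min_idem.
Qed.

Section Enumeration.
Variables (k : nat) (X : 'I_k -> Q).
Hypothesis HX : enumerates (min_idem m) X.

Lemma X_min i : min_idem m (X i).
Proof. by case: HX => _ H; apply/H; exists i. Qed.
Lemma X_idem i : m (X i) (X i) = X i. Proof. by case: (X_min i). Qed.
Lemma X_neq0 i : X i != 0. Proof. by case: (X_min i). Qed.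
Lemma X_primitive i : primitive (X i). Proof. exact/min_idem_primitive/X_min. Qed.

Lemma mulX i j : m (X i) (X j) = (i == j)%:R *: X i.
Proof.
have [<-|ij] := eqVneq i j; first by rewrite X_idem scale1r.
rewrite scale0r; apply: min_idem_orth; try exact: X_min.
by apply: contra ij => /eqP Xij; case: HX => inj _; rewrite (inj _ _ Xij).
Qed.

Lemma sum_X : \sum_i X i = e.
Proof.
have [r [ur rP orth sr]] := exists_orth_decomp (m1 e).
apply/eqP; rewrite eq_sym -subr_eq0; apply/eqP; set y := _ - _.
have yX l : m y (X l) = 0.
  rewrite mBl m1 msuml (bigD1 l) //= mulX eqxx scale1r big1 ?addr0 ?subrr //.
  by move=> j jl; rewrite mulX (negbTE jl) scale0r.
rewrite -[y]mr1 -sr msumr big1_seq // => q /andP [_ qr].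
have [qq q0 qprim] := rP q qr.
have : min_idem m q by apply: primitive_min_idem.
by case: HX => _ H /H [l ->].
Qed.

End Enumeration.

Lemma aut_min_idem tau : antilinear tau -> involutive tau -> ring_aut m e tau ->
  forall p, min_idem m p -> min_idem m (tau p).
Proof.
move=> tau_lin tauK [_ [tauM _]] p [p0 pp pmin]; split.
- by apply: contra p0 => /eqP tp0; rewrite -[p]tauK tp0 (s0 tau_lin).
- by rewrite -tauM pp.
move=> f ff fp.
have tff : m (tau f) (tau f) = tau f by rewrite -tauM ff.
have tfp : m (tau f) p = tau f by rewrite -{1}[p]tauK -tauM fp.
have [tf0|{}tfp] := pmin _ tff tfp.
  by left; rewrite -[f]tauK tf0 (s0 tau_lin).
by right; rewrite -tfp tauK.
Qed.

Lemma aut_permutes_min_idem k (X : 'I_k -> Q) tau :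
  enumerates (min_idem m) X ->
  antilinear tau -> involutive tau -> ring_aut m e tau ->
  exists tau' : 'I_k -> 'I_k, involutive tau' /\ forall i, tau (X i) = X (tau' i).
Proof.
move=> HX tau_lin tauK tau_aut.
have tauX i : exists j, X j == tau (X i).
  case: (HX) => _ HXe; have [j ->] : exists j, tau (X i) = X j.
    by apply/HXe/aut_min_idem/X_min.
  by exists j.
pose tau' i := odflt i [pick j | X j == tau (X i)].
have tau'E i : tau (X i) = X (tau' i).
  rewrite /tau'; case: pickP => [j /eqP //|none].
  by have [j /eqP Xj] := tauX i; move: (none j); rewrite Xj eqxx.
exists tau'; split => // i; case: (HX) => inj _.
by apply: inj; rewrite -!tau'E tauK.
Qed.

End Reduced.

Record pos_star_alg (C : numClosedFieldType) (Q : vectType C)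
    (m : Q -> Q -> Q) (e : Q) (s : Q -> Q) (t : Q -> C) : Prop := PosStarAlg {
  psa_mul : comm_assoc_unital_bilinear m e;
  psa_tr : lin_functional t;
  psa_antilinear : antilinear s;
  psa_involutive : involutive s;
  psa_aut : ring_aut m e s;
  psa_tr_conj : forall a, t (s a) = (t a)^*;
  psa_pos : forall a, a != 0 -> 0 < t (m a (s a)) }.

Section StarAlgebra.
Variables (C : numClosedFieldType) (Q : vectType C) (m : Q -> Q -> Q) (e : Q)
  (s : Q -> Q) (t : Q -> C).
Hypothesis HS : pos_star_alg m e s t.
Let Hm := psa_mul HS. Let Ht := psa_tr HS. Let Hs := psa_antilinear HS.
Let sK := psa_involutive HS.
Let mC := mC Hm. Let mA := mA Hm. Let m1 := m1 Hm. Let mr1 := mr1 Hm.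
Let mDl := mDl Hm. Let mZl := mZl Hm. Let mZr := mZr Hm.
Let m0r := m0r Hm. Let msuml := msuml Hm. Let msumr := msumr Hm.
Let tD := tD Ht. Let tZ := tZ Ht. Let t0 := t0 Ht. Let tsum := tsum Ht.
Let s0 := s0 Hs. Let sZ := sZ Hs. Let ssum := ssum Hs.

Definition form x y := t (m x (s y)).

Lemma sM x y : s (m x y) = m (s x) (s y). Proof. by case: (psa_aut HS) => _ []. Qed.
Lemma s1 : s e = e. Proof. by case: (psa_aut HS) => _ []. Qed.

Lemma formPl a x y z : form (a *: x + y) z = a * form x z + form y z.
Proof. by rewrite /form mDl mZl tD tZ. Qed.
Lemma formZl a x z : form (a *: x) z = a * form x z.
Proof. by rewrite /form mZl tZ. Qed.
Lemma formZr a x z : form z (a *: x) = a^* * form z x.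
Proof. by rewrite /form sZ mZr tZ. Qed.
Lemma form_suml z I (r : seq I) (P : pred I) (F : I -> Q) :
  form (\sum_(i <- r | P i) F i) z = \sum_(i <- r | P i) form (F i) z.
Proof. by rewrite /form msuml tsum. Qed.
Lemma form_sumr z I (r : seq I) (P : pred I) (F : I -> Q) :
  form z (\sum_(i <- r | P i) F i) = \sum_(i <- r | P i) form z (F i).
Proof. by rewrite /form ssum msumr tsum. Qed.
Lemma formC x y : form y x = (form x y)^*.
Proof. by rewrite /form -(psa_tr_conj HS) sM sK mC. Qed.
Lemma form1r x : form x e = t x.
Proof. by rewrite /form s1 mr1. Qed.
Lemma form1l x : form e x = t (s x).
Proof. by rewrite /form m1. Qed.
Lemma form_mull x y z : form (m x y) z = form y (m (s x) z).
Proof. by rewrite /form sM sK !mA (mC x y). Qed.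
Lemma form_gt0 x : x != 0 -> 0 < form x x. Proof. exact: (psa_pos HS). Qed.

Lemma form_eq0 x : form x x = 0 -> x = 0.
Proof. by move=> xx0; have [//|/form_gt0] := eqVneq x 0; rewrite xx0 ltxx. Qed.

(* By adjointness, b := s x * x has (b, b) = (x, (x x) (s x)) = 0, and then
   (x, x) = (1, b) = 0. *)
Lemma star_reduced x : m x x = 0 -> x = 0.
Proof.
move=> xx; pose b := m (s x) x.
have b0 : b = 0.
  apply: form_eq0; rewrite /b form_mull sK mA (mC x (s x)) -mA xx m0r.
  by rewrite /form s0 m0r t0.
by apply: form_eq0; rewrite -{1}(mr1 x) form_mull -/b b0 /form s0 m0r t0.
Qed.

Section Coordinates.
Variables (k : nat) (X : 'I_k -> Q).
Hypothesis HX : enumerates (min_idem m) X.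
Let mulX := mulX Hm star_reduced HX.

Lemma s_X i : s (X i) = X i.
Proof.
apply/eqP; apply: contraLR (form_gt0 (X_neq0 HX i)); rewrite eq_sym => Xs.
have sXmin := aut_min_idem Hs sK (psa_aut HS) (X_min HX i).
by rewrite /form (min_idem_orth Hm star_reduced (X_min HX i) sXmin Xs) t0 ?ltxx.
Qed.

Lemma formXX_tr i : form (X i) (X i) = t (X i).
Proof. by rewrite /form s_X X_idem. Qed.

Lemma formXX i j : form (X i) (X j) = form (X i) (X i) * (i == j)%:R.
Proof. by rewrite formXX_tr [LHS]/form s_X mulX tZ mulrC. Qed.

Lemma formXX_gt0 i : 0 < form (X i) (X i).
Proof. exact: form_gt0 (X_neq0 HX i). Qed.

Lemma formXX_neq0 i : form (X i) (X i) != 0.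
Proof. by rewrite gt_eqF ?formXX_gt0. Qed.

Definition icoord x i := form x (X i) / form (X i) (X i).

Lemma form_mulX x i : form (m x (X i)) (X i) = form x (X i).
Proof. by rewrite /form s_X -mA X_idem. Qed.

Lemma icoordZ a x i : icoord (a *: x) i = a * icoord x i.
Proof. by rewrite /icoord formZl mulrA. Qed.

Lemma icoord_mulX x i : icoord (m x (X i)) i = icoord x i.
Proof. by rewrite /icoord form_mulX. Qed.

Lemma mulX_icoord x i : m x (X i) = icoord x i *: X i.
Proof.
have [a xXa] := X_primitive Hm star_reduced HX i x; rewrite xXa; congr (_ *: _).
by rewrite -icoord_mulX xXa icoordZ /icoord divff ?formXX_neq0 ?mulr1.
Qed.

Lemma icoord_expand x : x = \sum_i icoord x i *: X i.
Proof.
rewrite -{1}[x]mr1 -(sum_X Hm star_reduced HX) msumr.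
by apply: eq_bigr => i _; rewrite mulX_icoord.
Qed.

Lemma icoord_inj x y : (forall i, icoord x i = icoord y i) -> x = y.
Proof.
move=> xy; rewrite (icoord_expand x) (icoord_expand y).
by apply: eq_bigr => i _; rewrite xy.
Qed.

Lemma icoordP a x y i : icoord (a *: x + y) i = a * icoord x i + icoord y i.
Proof. by rewrite /icoord formPl mulrDl mulrA. Qed.

Lemma icoord_sum I (r : seq I) (P : pred I) (c : I -> C) (v : I -> Q) i :
  icoord (\sum_(l <- r | P l) c l *: v l) i = \sum_(l <- r | P l) c l * icoord (v l) i.
Proof.
by rewrite /icoord form_suml mulr_suml; apply: eq_bigr => l _; rewrite formZl mulrA.
Qed.

Lemma icoordX l i : icoord (X l) i = (l == i)%:R.
Proof.
rewrite /icoord formXX; have [<-|li] := eqVneq l i; last by rewrite mulr0 mul0r.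
by rewrite mulr1 divff ?formXX_neq0.
Qed.

Lemma icoord_combination (c : 'I_k -> C) i : icoord (\sum_l c l *: X l) i = c i.
Proof.
rewrite icoord_sum (bigD1 i) //= icoordX eqxx mulr1 big1 ?addr0 // => l li.
by rewrite icoordX (negbTE li) mulr0.
Qed.

Lemma icoordM x y i : icoord (m x y) i = icoord x i * icoord y i.
Proof. by rewrite -icoord_mulX -mA mulX_icoord mZr icoordZ icoord_mulX mulrC. Qed.

Lemma alg_iso_icoord : alg_iso_Cd m e k.
Proof.
exists (fun x => \row_i icoord x i); split.
- by move=> a x y; apply/rowP => i; rewrite !mxE icoordP.
- exists (fun r : 'rV_k => \sum_i r 0 i *: X i) => [x|r].
    by rewrite [RHS]icoord_expand; apply: eq_bigr => i _; rewrite mxE.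
  by apply/rowP => i; rewrite mxE icoord_combination.
- by move=> x y i; rewrite !mxE icoordM.
- by move=> i; rewrite mxE -icoord_mulX m1 icoordX eqxx.
Qed.

Lemma idem_sum_X y :
  m y y = y -> exists b : 'I_k -> bool, y = \sum_i (b i : nat)%:R *: X i.
Proof.
move=> yy; exists (fun i => icoord y i == 1); rewrite {1}(icoord_expand y).
apply: eq_bigr => i _; have [-> //|c1] := eqVneq (icoord y i) 1.
have : icoord y i * (icoord y i - 1) = 0 by rewrite mulrBr mulr1 -icoordM yy subrr.
by move/eqP; rewrite mulf_eq0 subr_eq0 (negbTE c1) orbF => /eqP ->.
Qed.

End Coordinates.
End StarAlgebra.

Lemma sum_delta_mulr (R : nzRingType) k (F : 'I_k -> R) j0 :
  \sum_j F j * ((j == j0) : nat)%:R = F j0.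
Proof.
by rewrite (bigD1 j0) //= eqxx mulr1 big1 ?addr0 // => j /negPf ->; rewrite mulr0.
Qed.

Lemma sum_delta_scaler (R : nzRingType) (V : lmodType R) k (v : 'I_k -> V) j0 :
  \sum_j ((j == j0) : nat)%:R *: v j = v j0.
Proof.
by rewrite (bigD1 j0) //= eqxx scale1r big1 ?addr0 // => j /negPf ->; rewrite scale0r.
Qed.

Section CharAlgebra.
Variables (C : numClosedFieldType) (Q : vectType C) (o : ops Q).
Hypothesis hQ : is_char_algebra o.

Lemma char_alg_dot : pos_star_alg (dot o) (one_d o) (piA o) (tr_d o).
Proof.
by case: hQ => [[Hm [_ [Ht _]]] [Hs _ sK _ _] [Haut _ _ _] [Htr _ Hpos] _];
  split => // a; case: (Htr a).
Qed.

Lemma ip_dot a b : ip o a b = form (dot o) (piA o) (tr_d o) a b.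
Proof. by []. Qed.

Lemma ip_cross a b : ip o a b = form (cross o) (muA o) (tr_x o) a b.
Proof. by case: hQ => _ _ _ [_ Hii _] _; apply: Hii. Qed.

Lemma char_alg_cross : pos_star_alg (cross o) (one_x o) (muA o) (tr_x o).
Proof.
case: hQ => [[_ [Hm [_ Ht]]] [_ Hs _ sK _] [_ _ _ Haut] [Htr _ Hpos] _].
split => // [a|a a0]; first by case: (Htr a).
by move: (Hpos a a0); rewrite -[tr_d _ _]/(ip o a a) ip_cross.
Qed.

Lemma ip_piA x y : ip o (piA o x) (piA o y) = (ip o x y)^*.
Proof.
case: hQ => _ _ [[_ [piAM _]] _ _ _] [Htr _ _] _.
by rewrite /ip -piAM; case: (Htr (dot o x (piA o y))).
Qed.

Lemma ip_muA x y : ip o (muA o x) (muA o y) = (ip o x y)^*.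
Proof.
case: hQ => _ [_ _ _ _ piAmuA] [_ _ [_ [muAM _]] _] [Htr _ _] _.
by rewrite /ip piAmuA -muAM; case: (Htr (dot o x (piA o y))).
Qed.

Lemma muA_dot_aut : ring_aut (dot o) (one_d o) (muA o). Proof. by case: hQ => _ _ []. Qed.
Lemma piA_cross_aut : ring_aut (cross o) (one_x o) (piA o). Proof. by case: hQ => _ _ []. Qed.

Let Sd := char_alg_dot.
Let Sx := char_alg_cross.

Lemma ipC x y : ip o y x = (ip o x y)^*. Proof. exact: (formC Sd). Qed.

Section MinimalIdempotents.
Variables (k : nat) (X Psi : 'I_k -> Q).
Hypotheses (HX : enumerates (min_idem (dot o)) X) (HP : enumerates (min_idem (cross o)) Psi).
Local Notation A i := (ip o (X i) (X i)).
Local Notation B j := (ip o (Psi j) (Psi j)).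

Lemma ip_X i i' : ip o (X i) (X i') = A i * (i == i')%:R.
Proof. exact: (formXX Sd HX). Qed.

Lemma ip_Psi j j' : ip o (Psi j) (Psi j') = B j * (j == j')%:R.
Proof. by rewrite !ip_cross; exact: (formXX Sx HP). Qed.

Lemma ip_X_tr i : A i = tr_d o (X i) /\ 0 < A i.
Proof. by split; [exact: (formXX_tr Sd HX) | exact: (formXX_gt0 Sd HX)]. Qed.

Lemma ip_Psi_tr j : B j = tr_x o (Psi j) /\ 0 < B j.
Proof. by rewrite ip_cross; split; [exact: (formXX_tr Sx HP) | exact: (formXX_gt0 Sx HP)]. Qed.

(* Expand Psi j along the orthogonal basis X: its coordinates are
   (Psi j, X i) / A i. *)
Lemma ip_Psi_orthogonality j l :
  B j * (j == l)%:R = \sum_i (A i)^-1 * (ip o (X i) (Psi j))^* * ip o (X i) (Psi l).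
Proof.
rewrite -ip_Psi {1}(icoord_expand Sd HX (Psi j)) ip_dot (form_suml Sd).
by apply: eq_bigr => i _; rewrite (formZl Sd) /icoord -!ip_dot ipC [_ / _]mulrC.
Qed.

Lemma ip_X_orthogonality i l :
  A i * (i == l)%:R = \sum_j (B j)^-1 * ip o (X i) (Psi j) * (ip o (X l) (Psi j))^*.
Proof.
rewrite -ip_X {1}(icoord_expand Sx HP (X i)) ip_cross (form_suml Sx).
by apply: eq_bigr => j _; rewrite (formZl Sx) /icoord -!ip_cross (ipC (X l)) [_ / _]mulrC.
Qed.

Lemma index_involutions : exists mu' pi' : 'I_k -> 'I_k,
  [/\ involutive mu' /\ involutive pi',
      (forall i, muA o (X i) = X (mu' i)) /\ (forall j, piA o (Psi j) = Psi (pi' j)) &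
      [/\ forall i, A (mu' i) = A i,
          forall j, B (pi' j) = B j,
          forall i j, ip o (X i) (Psi (pi' j)) = (ip o (X i) (Psi j))^* &
          forall i j, ip o (X (mu' i)) (Psi j) = (ip o (X i) (Psi j))^*]].
Proof.
have [mu' [mu'K muX]] :=
  aut_permutes_min_idem HX (psa_antilinear Sx) (psa_involutive Sx) muA_dot_aut.
have [pi' [pi'K piPsi]] :=
  aut_permutes_min_idem HP (psa_antilinear Sd) (psa_involutive Sd) piA_cross_aut.
exists mu', pi'; split => //; split => [i|j|i j|i j].
- by rewrite -muX ip_muA geC0_conj // ltW //; case: (ip_X_tr i).
- by rewrite -piPsi ip_piA geC0_conj // ltW //; case: (ip_Psi_tr j).
- by rewrite -piPsi -{1}(s_X Sd HX i) ip_piA.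
- by rewrite -muX -{1}(s_X Sx HP j) ip_muA.
Qed.

Variable n : C.
Hypothesis hn : cross o (one_d o) (one_d o) = n *: one_d o.

Lemma unit_d_neq0 (i : 'I_k) : one_d o != 0.
Proof.
apply: contra (X_neq0 HX i) => /eqP one0.
by rewrite -[X i](mr1 (psa_mul Sd)) one0 (m0r (psa_mul Sd)).
Qed.

Lemma unit_cross_scale : one_d o != 0 -> n \is Num.real /\ n != 0.
Proof.
move=> one0; have [n' [n'r n'gt0 hn']] : exists n' : C, [/\ n' \is Num.real, 0 < n' &
    cross o (one_d o) (one_d o) = n' *: one_d o] by case: hQ => _ _ _ _ [].
suff -> : n = n' by rewrite gt_eqF.
have /eqP : (n - n') *: one_d o = 0 by rewrite scalerBl -hn -hn' subrr.
by rewrite scaler_eq0 (negbTE one0) orbF subr_eq0 => /eqP.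
Qed.

Lemma scaled_unit_cross_idem :
  cross o (n^-1 *: one_d o) (n^-1 *: one_d o) = n^-1 *: one_d o.
Proof.
have Hm := psa_mul Sx; have [->|/unit_cross_scale [_ n0]] := eqVneq (one_d o) 0.
  by rewrite scaler0 (m0l Hm).
by rewrite (mZl Hm) (mZr Hm) hn !scalerA divfK.
Qed.

Lemma ip_X_unit_d (nj : 'I_k -> bool) :
  n^-1 *: one_d o = \sum_j (nj j : nat)%:R *: Psi j ->
  forall i, A i = n * \sum_j ip o (X i) (Psi j) * (nj j : nat)%:R.
Proof.
move=> hnj i; have [n_real n0] := unit_cross_scale (unit_d_neq0 i).
have /(congr1 (ip o (X i))) := hnj; rewrite !ip_dot (formZr Sd) (form1r Sd) (form_sumr Sd).
rewrite -(formXX_tr Sd HX) conj_Creal ?realV // => An.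
rewrite -[LHS](mulVKf n0) An; congr (_ * _).
by apply: eq_bigr => j _; rewrite (formZr Sd) conjC_nat mulrC.
Qed.

Lemma ip_Psi_unit_x (mi : 'I_k -> bool) :
  one_x o = \sum_i (mi i : nat)%:R *: X i ->
  forall j, B j = \sum_i ip o (X i) (Psi j) * (mi i : nat)%:R.
Proof.
move=> hmi j; have [-> _] := ip_Psi_tr j.
have -> : tr_x o (Psi j) = ip o (one_x o) (Psi j) by rewrite ip_cross (form1l Sx) (s_X Sx HP).
by rewrite hmi ip_dot (form_suml Sd); apply: eq_bigr => i _; rewrite (formZl Sd) mulrC.
Qed.

End MinimalIdempotents.
End CharAlgebra.

Section Transport.
Variables (C : numClosedFieldType) (Q Q2 : vectType C) (o : ops Q) (o2 : ops Q2).
Hypotheses (hQ : is_char_algebra o) (hQ2 : is_char_algebra o2).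
Variables (k : nat) (X Psi : 'I_k -> Q) (X2 Psi2 : 'I_k -> Q2) (mu' : 'I_k -> 'I_k).
Hypotheses (HX : enumerates (min_idem (dot o)) X) (HP : enumerates (min_idem (cross o)) Psi).
Hypotheses (HX2 : enumerates (min_idem (dot o2)) X2)
  (HP2 : enumerates (min_idem (cross o2)) Psi2).
Hypotheses (hA : forall i, ip o2 (X2 i) (X2 i) = ip o (X i) (X i))
  (hB : forall j, ip o2 (Psi2 j) (Psi2 j) = ip o (Psi j) (Psi j))
  (hC : forall i j, ip o2 (X2 i) (Psi2 j) = ip o (X i) (Psi j))
  (hmu : forall i, muA o (X i) = X (mu' i))
  (hmu2 : forall i, muA o2 (X2 i) = X2 (mu' i)).

Let Sd := char_alg_dot hQ. Let Sx := char_alg_cross hQ.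
Let Sd2 := char_alg_dot hQ2. Let Sx2 := char_alg_cross hQ2.
Local Notation cd := (icoord (dot o) (piA o) (tr_d o) X).
Local Notation cx := (icoord (cross o) (muA o) (tr_x o) Psi).
Local Notation cd2 := (icoord (dot o2) (piA o2) (tr_d o2) X2).
Local Notation cx2 := (icoord (cross o2) (muA o2) (tr_x o2) Psi2).

Definition transport x := \sum_i cd x i *: X2 i.

Lemma icoord_transport x i : cd2 (transport x) i = cd x i.
Proof. exact: (icoord_combination Sd2 HX2). Qed.

Lemma transport_combination I (r : seq I) (P : pred I) (c : I -> C) (v : I -> Q) :
  transport (\sum_(l <- r | P l) c l *: v l) = \sum_(l <- r | P l) c l *: transport (v l).
Proof.
apply: (icoord_inj Sd2 HX2) => i; rewrite icoord_transport (icoord_sum Sd) (icoord_sum Sd2).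
by apply: eq_bigr => l _; rewrite icoord_transport.
Qed.

Lemma transport_X i : transport (X i) = X2 i.
Proof.
apply: (icoord_inj Sd2 HX2) => l.
by rewrite icoord_transport (icoordX Sd HX) (icoordX Sd2 HX2).
Qed.

(* Psi j and Psi2 j have the same X-coordinates (Psi j, X i) / A i, namely
   the conjugate of C i j / A i. *)
Lemma transport_Psi j : transport (Psi j) = Psi2 j.
Proof.
apply: (icoord_inj Sd2 HX2) => i; rewrite icoord_transport /icoord.
by rewrite -!ip_dot (ipC hQ) (ipC hQ2) hC hA.
Qed.

Lemma transport_cross_expand x : transport x = \sum_j cx x j *: Psi2 j.
Proof.
rewrite {1}(icoord_expand Sx HP x) transport_combination.
by apply: eq_bigr => j _; rewrite transport_Psi.
Qed.

Lemma icoord_cross_transport x j : cx2 (transport x) j = cx x j.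
Proof. by rewrite transport_cross_expand (icoord_combination Sx2 HP2). Qed.

Lemma transportP a x y : transport (a *: x + y) = a *: transport x + transport y.
Proof.
apply: (icoord_inj Sd2 HX2) => i.
by rewrite (icoordP Sd2) !icoord_transport (icoordP Sd).
Qed.

Lemma transport_bij : bijective transport.
Proof.
exists (fun y => \sum_i cd2 y i *: X i) => [x|y].
  by rewrite [RHS](icoord_expand Sd HX x); apply: eq_bigr => i _; rewrite icoord_transport.
by apply: (icoord_inj Sd2 HX2) => i; rewrite icoord_transport (icoord_combination Sd HX).
Qed.

Lemma transport_dot x y : transport (dot o x y) = dot o2 (transport x) (transport y).
Proof.
apply: (icoord_inj Sd2 HX2) => i.
by rewrite (icoordM Sd2 HX2) !icoord_transport (icoordM Sd HX).
Qed.

Lemma transport_cross x y : transport (cross o x y) = cross o2 (transport x) (transport y).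
Proof.
apply: (icoord_inj Sx2 HP2) => j.
by rewrite (icoordM Sx2 HP2) !icoord_cross_transport (icoordM Sx HP).
Qed.

Lemma transport_tr_d x : tr_d o2 (transport x) = tr_d o x.
Proof.
rewrite {2}(icoord_expand Sd HX x) /transport (tsum (psa_tr Sd2)) (tsum (psa_tr Sd)).
apply: eq_bigr => i _; rewrite (tZ (psa_tr Sd2)) (tZ (psa_tr Sd)).
by rewrite -(formXX_tr Sd HX) -(formXX_tr Sd2 HX2) -!ip_dot hA.
Qed.

Lemma transport_tr_x x : tr_x o2 (transport x) = tr_x o x.
Proof.
rewrite transport_cross_expand {2}(icoord_expand Sx HP x).
rewrite (tsum (psa_tr Sx2)) (tsum (psa_tr Sx)); apply: eq_bigr => j _.
rewrite (tZ (psa_tr Sx2)) (tZ (psa_tr Sx)).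
by rewrite -(formXX_tr Sx HP) -(formXX_tr Sx2 HP2) -(ip_cross hQ) -(ip_cross hQ2) hB.
Qed.

Lemma transport_piA x : transport (piA o x) = piA o2 (transport x).
Proof.
have [Hs Hs2] := (psa_antilinear Sd, psa_antilinear Sd2).
rewrite {1}(icoord_expand Sd HX x) (ssum Hs) [in RHS]/transport (ssum Hs2).
under eq_bigr => i _ do rewrite (sZ Hs) (s_X Sd HX).
rewrite transport_combination; apply: eq_bigr => i _.
by rewrite (sZ Hs2) (s_X Sd2 HX2) transport_X.
Qed.

Lemma transport_muA x : transport (muA o x) = muA o2 (transport x).
Proof.
have [Hs Hs2] := (psa_antilinear Sx, psa_antilinear Sx2).
rewrite {1}(icoord_expand Sd HX x) (ssum Hs) [in RHS]/transport (ssum Hs2).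
under eq_bigr => i _ do rewrite (sZ Hs) hmu.
rewrite transport_combination; apply: eq_bigr => i _.
by rewrite (sZ Hs2) hmu2 transport_X.
Qed.

Lemma transport_iso : char_alg_iso o o2 transport.
Proof.
split; [exact: transportP | exact: transport_bij | | |].
- by split; [exact: transport_dot | exact: transport_cross].
- by split; [exact: transport_tr_d | exact: transport_tr_x].
- by split; [exact: transport_piA | exact: transport_muA].
Qed.

End Transport.

Unset Implicit Arguments.

Theorem propositionP (C : numClosedFieldType) (Q : vectType C) (o : ops Q) (n : C)
  (hQ : is_char_algebra o)
  (hn : cross o (one_d o) (one_d o) = n *: one_d o) :
  let d := \dim (fullv : {vspace Q}) in
  [/\ (* (1) *)
      alg_iso_Cd (dot o) (one_d o) d /\ alg_iso_Cd (cross o) (one_x o) d,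
      exists X : 'I_d -> Q, enumerates (min_idem (dot o)) X,
      exists Psi : 'I_d -> Q, enumerates (min_idem (cross o)) Psi &
      forall (X Psi : 'I_d -> Q),
        enumerates (min_idem (dot o)) X ->
        enumerates (min_idem (cross o)) Psi ->
        let A i := ip o (X i) (X i) in
        let B j := ip o (Psi j) (Psi j) in
        let Cm i j := ip o (X i) (Psi j) in
        [/\ (* (2) *)
            (forall i, piA o (X i) = X i) /\ (forall j, muA o (Psi j) = Psi j),
            (* (2), (3) symmetries, (4) *)
            exists (mu' pi' : 'I_d -> 'I_d),
              [/\ involutive mu' /\ involutive pi',
                  (forall i, muA o (X i) = X (mu' i)) /\
                  (forall j, piA o (Psi j) = Psi (pi' j)),
                  [/\ forall i, A (mu' i) = A i,
                      forall j, B (pi' j) = B j,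
                      forall i j, Cm i (pi' j) = (Cm i j)^* &
                      forall i j, Cm (mu' i) j = (Cm i j)^*] &
                  (* (4) *)
                  forall (Q2 : vectType C) (o2 : ops Q2) (X2 Psi2 : 'I_d -> Q2),
                    is_char_algebra o2 ->
                    enumerates (min_idem (dot o2)) X2 ->
                    enumerates (min_idem (cross o2)) Psi2 ->
                    (forall i, ip o2 (X2 i) (X2 i) = A i) ->
                    (forall j, ip o2 (Psi2 j) (Psi2 j) = B j) ->
                    (forall i j, ip o2 (X2 i) (Psi2 j) = Cm i j) ->
                    (forall i, muA o2 (X2 i) = X2 (mu' i)) ->
                    (forall j, piA o2 (Psi2 j) = Psi2 (pi' j)) ->
                    exists f : Q -> Q2, char_alg_iso o o2 f],
            (* (3) *)
            [/\ forall i i', ip o (X i) (X i') = A i * (i == i')%:R,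
                forall j j', ip o (Psi j) (Psi j') = B j * (j == j')%:R,
                forall i, A i = tr_d o (X i) /\ 0 < A i,
                forall j, B j = tr_x o (Psi j) /\ 0 < B j &
                (forall k l, B k * (k == l)%:R = \sum_i (A i)^-1 * (Cm i k)^* * Cm i l) /\
                (forall i j, A i * (i == j)%:R = \sum_s (B s)^-1 * Cm i s * (Cm j s)^*)] &
            (* (5) *)
            [/\ cross o (n^-1 *: one_d o) (n^-1 *: one_d o) = n^-1 *: one_d o
                /\ dot o (one_x o) (one_x o) = one_x o,
                (exists nj : 'I_d -> bool, n^-1 *: one_d o = \sum_j (nj j : nat)%:R *: Psi j) /\
                (exists mi : 'I_d -> bool, one_x o = \sum_i (mi i : nat)%:R *: X i),
                forall nj : 'I_d -> bool, n^-1 *: one_d o = \sum_j (nj j : nat)%:R *: Psi j ->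
                  forall i, A i = n * \sum_j Cm i j * (nj j : nat)%:R,
                forall mi : 'I_d -> bool, one_x o = \sum_i (mi i : nat)%:R *: X i ->
                  forall j, B j = \sum_i Cm i j * (mi i : nat)%:R &
                forall i0 j0, n^-1 *: one_d o = Psi j0 -> one_x o = X i0 ->
                  (forall i, A i = n * Cm i j0) /\ (forall j, B j = Cm i0 j)]]].
Proof.
move=> d; have [Sd Sx] := (char_alg_dot hQ, char_alg_cross hQ).
have [X0 HX0] := exists_min_idem_enum (psa_mul Sd) (star_reduced Sd).
have [P0 HP0] := exists_min_idem_enum (psa_mul Sx) (star_reduced Sx).
split; [ | by exists X0 | by exists P0 | move=> X Psi HX HP A B Cm].
  exact: (conj (alg_iso_icoord Sd HX0) (alg_iso_icoord Sx HP0)).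
have unit_x_idem : dot o (one_x o) (one_x o) = one_x o by case: hQ => _ _ _ _ [].
split.
- exact: (conj (s_X Sd HX) (s_X Sx HP)).
- have [mu' [pi' [invol perm sym]]] := index_involutions hQ HX HP.
  exists mu', pi'; split => // Q2 o2 X2 Psi2 hQ2 HX2 HP2 hA hB hC hmu2 _.
  by eexists; apply: (transport_iso hQ hQ2 HX HP HX2 HP2 hA hB hC perm.1 hmu2).
- split; [exact: ip_X | exact: ip_Psi | exact: ip_X_tr | exact: ip_Psi_tr |].
  exact: (conj (ip_Psi_orthogonality hQ HX HP) (ip_X_orthogonality hQ HX HP)).
split.
- exact: (conj (scaled_unit_cross_idem hQ hn) unit_x_idem).
- split; [exact: (idem_sum_X Sx HP (scaled_unit_cross_idem hQ hn)) |].
  exact: (idem_sum_X Sd HX unit_x_idem).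
- exact: (ip_X_unit_d hQ HX hn).
- exact: (ip_Psi_unit_x hQ HP).
move=> i0 j0 hj0 hi0; split => [i|j]; rewrite /A /B /Cm.
- rewrite (@ip_X_unit_d _ _ _ hQ _ X Psi HX n hn (fun j => j == j0)).
    by rewrite sum_delta_mulr.
  by rewrite sum_delta_scaler.
- rewrite (@ip_Psi_unit_x _ _ _ hQ _ X Psi HP (fun i => i == i0)).
    by rewrite sum_delta_mulr.
  by rewrite sum_delta_scaler.
Qed.
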